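(* Let $r\ge 2$ and $n\ge 4$. For any vertex $(x,y)$ of $\mathcal{D}_{n-1}$ we have $$\pi_n\big(rx+(r-1)y\big)=\pi_{n-1}(x+y),$$ where $\pi_n$ and $\pi_{n-1}$ are as defined in the context.
   Context: Fix an integer $r\ge 2$. Define $c_1=0$, $c_2=1$, $c_n=rc_{n-1}-c_{n-2}$ for $n\ge 3$. For nonnegative integers $a,b$, the maximal Dyck path $\mathcal{P}(a,b)$ is the lattice path from $(0,0)$ to $(a,b)$ using unit north and east steps that never passes strictly above the line segment from $(0,0)$ to $(a,b)$ and is closest to that segment. For $n\ge 3$ let $\mathcal{D}_n=\mathcal{P}(c_{n-1}-c_{n-2},c_{n-2})$; it has $c_{n-1}$ steps, and its vertices are $w_0=(0,0),w_1,\dots,w_{c_{n-1}}$ in order, where $w_i$ is the endpoint of the first $i$ steps (so $w_i=(x,i-x)$ for some $x$). For $n\ge 3$ define $\pi_n:\{0,1,\dots,c_{n-1}\}\to\mathbb{Z}$ by $\pi_n(i)=xc_{n-2}-(i-x)(c_{n-1}-c_{n-2})$, where $w_i=(x,i-x)$ is the $i$-th vertex of $\mathcal{D}_n$. *)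

From mathcomp Require Import all_boot all_order all_algebra.
Set Implicit Arguments. Unset Strict Implicit. Unset Printing Implicit Defensive.
Import GRing.Theory Num.Theory.

(* The sequence c_1 = 0, c_2 = 1, c_k = r c_{k-1} - c_{k-2}.  For r >= 2 it is
   nonnegative and nondecreasing, so nat (truncated) subtraction is exact. *)
Fixpoint cpair (r k : nat) : nat * nat :=
  if k is k'.+1 then let p := cpair r k' in (p.2, r * p.2 - p.1) else (0, 1).

(* cseq r k = c_k for k >= 1 (cseq r 0 = 0 is junk). *)
Definition cseq (r k : nat) : nat := (cpair r k.-1).1.

(* Maximal Dyck path P(a,b), as a word: true = east step, false = north step.
   It is the lower Christoffel path: at abscissa k the path climbs up to
   height floor(b k / a), the highest lattice height not above the segment. *)
Definition dheight (a b k : nat) : nat := (b * k) %/ a.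

Definition dyck_word (a b : nat) : seq bool :=
  flatten [seq true :: nseq (dheight a b k.+1 - dheight a b k) false | k <- iota 0 a]
  ++ nseq (b - dheight a b a) false.

Definition vertex (w : seq bool) (i : nat) : nat * nat :=
  (count id (take i w), count negb (take i w)).

Definition Dpath (r n : nat) : seq bool :=
  dyck_word (cseq r n.-1 - cseq r n.-2) (cseq r n.-2).

Definition is_vertex (r n x y : nat) : Prop :=
  exists i, i <= cseq r n.-1 /\ vertex (Dpath r n) i = (x, y).

Definition pi_map (r n i : nat) : int :=
  let x := (vertex (Dpath r n) i).1 in
  (x * cseq r n.-2)%:Z - ((i - x) * (cseq r n.-1 - cseq r n.-2))%:Z.

From mathcomp Require Import all_boot all_order all_algebra zify.

Set Implicit Arguments.
Unset Strict Implicit.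
Unset Printing Implicit Defensive.

(* A vertex (X, Y) of the maximal Dyck path P(a, b) lies in the window
   0 <= X b - Y a < a + b, and since i b = Y (a + b) + (X b - Y a) for
   i = X + Y, this forces X b - Y a = i b mod (a + b).  Hence
   pi_n(i) = i c_{n-2} mod c_{n-1}.  For i = r x + (r - 1) y, the recurrence
   r c_{n-2} = c_{n-1} + c_{n-3} gives
   i c_{n-2} = (x + y) c_{n-1} + (x c_{n-3} - y (c_{n-2} - c_{n-3})),
   and the last term is pi_{n-1}(x + y), which already lies in [0, c_{n-2}). *)

Section MaxDyckPath.

Variables a b : nat.

Definition dyck_block (k : nat) : seq bool :=
  true :: nseq (dheight a b k.+1 - dheight a b k) false.

Definition dyck_blocks (k0 n : nat) : seq bool :=
  flatten [seq dyck_block k | k <- iota k0 n].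

Lemma dyck_blocksS k0 n :
  dyck_blocks k0 n.+1 = dyck_block k0 ++ dyck_blocks k0.+1 n.
Proof. by []. Qed.

Lemma leq_dheight k m : k <= m -> dheight a b k <= dheight a b m.
Proof. by move=> le_km; apply: leq_div2r; rewrite leq_mul2l le_km orbT. Qed.

Lemma dheight_lb k : a * dheight a b k <= b * k.
Proof. by rewrite mulnC; apply: leq_divM. Qed.

Lemma count_dyck_blocks k0 n :
  count id (dyck_blocks k0 n) = n /\
  count negb (dyck_blocks k0 n) = dheight a b (k0 + n) - dheight a b k0.
Proof.
elim: n k0 => [|n IHn] k0; first by rewrite addn0 subnn.
rewrite dyck_blocksS !count_cat; have [-> ->] := IHn k0.+1.
rewrite /= !count_nseq /= mul0n.
have := leq_dheight (leqnSn k0); have := leq_dheight (leq_addr n k0.+1).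
by rewrite -addSnnS; split; lia.
Qed.

Hypothesis a_gt0 : 0 < a.

Lemma dheight_ub k : b * k < a * dheight a b k + a.
Proof. by have := ltn_ceil (b * k) a_gt0; rewrite /dheight; lia. Qed.

Lemma dyck_blocks_window k0 n j :
  let s := take j (dyck_blocks k0 n) in
  a * (dheight a b k0 + count negb s) <= b * (k0 + count id s) <
  a * (dheight a b k0 + count negb s) + a + b.
Proof.
have start k : a * dheight a b k <= b * k < a * dheight a b k + a + b.
  by have := dheight_lb k; have := dheight_ub k; lia.
elim: n k0 j => [|n IHn] k0 j /=; first by rewrite /dyck_blocks /= !addn0.
rewrite dyck_blocksS take_cat /= size_nseq.
have le_h := leq_dheight (leqnSn k0).
case: ltnP => [lt_j|le_j].
  case: j lt_j => [|j] lt_j; first by rewrite take0 /= !addn0.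
  rewrite /= take_nseq; last by lia.
  rewrite !count_nseq /= mul1n mul0n add0n addn0.
  have := dheight_lb k0.+1; have := dheight_ub k0.
  have : a * (dheight a b k0 + j) <= a * dheight a b k0.+1 by rewrite leq_mul2l; lia.
  by rewrite -addn1 !mulnDr muln1; lia.
have := IHn k0.+1 (j - (dheight a b k0.+1 - dheight a b k0).+1).
rewrite /= !count_cat !count_nseq /= mul1n mul0n !add0n.
set ct := count id _; set cf := count negb _.
have -> : dheight a b k0 + (dheight a b k0.+1 - dheight a b k0 + cf) =
          dheight a b k0.+1 + cf by lia.
by rewrite add1n -addSnnS.
Qed.

Lemma dyck_wordE : dyck_word a b = dyck_blocks 0 a.
Proof. by rewrite /dyck_word /dheight mulnK // subnn cats0. Qed.

Lemma count_dyck_word :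
  count id (dyck_word a b) = a /\ count negb (dyck_word a b) = b.
Proof.
rewrite dyck_wordE; have [-> ->] := count_dyck_blocks 0 a.
by rewrite /dheight mulnK // muln0 div0n subn0.
Qed.

Lemma size_dyck_word : size (dyck_word a b) = a + b.
Proof. by rewrite -(count_predC id); have [-> ->] := count_dyck_word. Qed.

Section Vertex.

Variables i X Y : nat.
Hypothesis vertex_i : vertex (dyck_word a b) i = (X, Y).

Lemma vertex_ub : X <= a /\ Y <= b.
Proof.
move: vertex_i => [<- <-]; have [ca cb] := count_dyck_word.
have sub_w := take_subseq (dyck_word a b) i.
by split; [rewrite -[X in _ <= X]ca | rewrite -[X in _ <= X]cb]; apply: leq_count_subseq.
Qed.

Lemma vertex_sum : i <= a + b -> X + Y = i.
Proof.
move: vertex_i => [<- <-] le_i.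
by rewrite count_predC size_take size_dyck_word; case: ltnP; lia.
Qed.

Lemma vertex_window : Y * a <= X * b < Y * a + a + b.
Proof.
move: vertex_i => [<- <-]; have := dyck_blocks_window 0 a i.
by rewrite dyck_wordE /dheight muln0 div0n !add0n [a * _]mulnC [b * _]mulnC.
Qed.

Lemma vertex_potential : i <= a + b -> X * b = Y * a + (i * b) %% (a + b).
Proof.
move=> le_i; have win := vertex_window; have sumXY := vertex_sum le_i.
have -> : i * b = Y * (a + b) + (X * b - Y * a) by rewrite -sumXY; lia.
by rewrite modnMDl modn_small; lia.
Qed.

End Vertex.

End MaxDyckPath.

Lemma cseqSS r k : cseq r k.+3 = r * cseq r k.+2 - cseq r k.+1.
Proof. by []. Qed.

Lemma cseq_lt r k : 2 <= r -> cseq r k.+1 < cseq r k.+2.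
Proof.
move=> r_ge2; elim: k => [|k IHk] //.
have : 2 * cseq r k.+2 <= r * cseq r k.+2 by rewrite leq_mul2r r_ge2 orbT.
by rewrite cseqSS; lia.
Qed.

Lemma cseqSS_add r k : 2 <= r -> cseq r k.+3 + cseq r k.+1 = r * cseq r k.+2.
Proof.
move=> r_ge2; have := cseq_lt k r_ge2.
have : cseq r k.+2 <= r * cseq r k.+2 by rewrite leq_pmull; lia.
by rewrite cseqSS; lia.
Qed.

Lemma pi_map_modE r n i : 2 <= r -> 3 <= n -> i <= cseq r n.-1 ->
  pi_map r n i = Posz ((i * cseq r n.-2) %% cseq r n.-1).
Proof.
case: n => [|[|[|m]]] // r_ge2 _ le_i.
rewrite /pi_map; case vtx: vertex => [X Y] /=; move: vtx le_i; rewrite /Dpath /=.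
set b := cseq r m.+1; set c := cseq r m.+2 => vtx le_i.
have lt_bc : b < c by apply: cseq_lt.
have a_gt0 : 0 < c - b by lia.
have le_i' : i <= c - b + b by lia.
have := vertex_potential a_gt0 vtx le_i'; rewrite subnK ?(ltnW lt_bc) // => ->.
have -> : i - X = Y by have := vertex_sum a_gt0 vtx le_i'; lia.
lia.
Qed.

Section LiftVertex.

Variables r A B C j x y : nat.
Hypotheses (r_ge2 : 2 <= r) (lt_AB : A < B) (CA_rB : C + A = r * B).
Hypotheses (le_jB : j <= B) (vtx : vertex (dyck_word (B - A) A) j = (x, y)).

Let a_gt0 : 0 < B - A. Proof. by rewrite subn_gt0. Qed.
Let le_j : j <= B - A + A. Proof. by rewrite subnK // ltnW. Qed.

Lemma lift_vertex_le : r * x + (r - 1) * y <= C.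
Proof.
have [le_x le_y] := vertex_ub a_gt0 vtx.
have : r * x <= r * (B - A) by rewrite leq_mul2l le_x orbT.
have : (r - 1) * y <= (r - 1) * A by rewrite leq_mul2l le_y orbT.
nia.
Qed.

Lemma lift_vertex_mod : (r * x + (r - 1) * y) * B %% C = (x + y) * A %% B.
Proof.
have sum_xy := vertex_sum a_gt0 vtx le_j.
have := vertex_potential a_gt0 vtx le_j.
rewrite -{}sum_xy subnK ?(ltnW lt_AB) // => pot.
set p := (x + y) * A %% B in pot *.
have lt_pC : p < C.
  have : 2 * B <= r * B by rewrite leq_mul2r r_ge2 orbT.
  have : p < B by rewrite ltn_mod; lia.
  lia.
have shift : (r * x + (r - 1) * y) * B = (x + y) * C + p.
  have := congr1 (muln x) CA_rB; have := congr1 (muln y) CA_rB.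
  have : y * A <= y * B by rewrite leq_mul2l ltnW ?orbT.
  have : B * y <= B * (r * y) by rewrite leq_mul2l leq_pmull ?orbT; lia.
  move: pot; rewrite mulnBr mulnDl mulnBl mul1n => pot.
  nia.
by rewrite shift modnMDl modn_small.
Qed.

End LiftVertex.

Theorem mainTheorem2 (r n x y : nat) :
  2 <= r -> 4 <= n -> is_vertex r n.-1 x y ->
  r * x + (r - 1) * y <= cseq r n.-1 /\
  pi_map r n (r * x + (r - 1) * y) = pi_map r n.-1 (x + y).
Proof.
case: n => [|[|[|[|m]]]] // r_ge2 _ [j []]; rewrite /Dpath /= => le_j vtx.
have lt_AB := cseq_lt m r_ge2.
have sum_xy : x + y = j by apply: (vertex_sum _ vtx); lia.
have CA_rB := cseqSS_add m r_ge2.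
have bound := lift_vertex_le r_ge2 lt_AB CA_rB le_j vtx.
split=> //; rewrite !pi_map_modE //=; last by lia.
by rewrite (lift_vertex_mod r_ge2 lt_AB CA_rB le_j vtx).
Qed.
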